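(* There exist an undirected graph $G=(V,E)$, pairs $(u_i,v_i)$ of distinct nodes of $V$, $1\le i\le4$, with $\sigma_{u_1v_1}=\sigma_{u_2v_2}=2$ and $\sigma_{u_3v_3}=\sigma_{u_4v_4}=1$, and values $x_1,\dots,x_4\in(0,1]$ such that the set $\{((u_i,v_i),x_i): 1\le i\le 4\}$ is shattered by $\{R_w: w\in V\}$.
   Context: $\mathcal{D}=\{(u,v)\in V\times V: u\ne v\}$. $\sigma_{uv}$ is the number of shortest paths from $u$ to $v$, $\sigma_{uv}(w)$ the number of those to which $w$ is internal ($w\ne u,v$, path through $w$); $f_w(u,v)=\sigma_{uv}(w)/\sigma_{uv}$ ($0$ if $\sigma_{uv}=0$). For $w\in V$, $R_w=\{((u,v),x)\in\mathcal{D}\times[0,1]: x\le f_w(u,v)\}$. A set $Q$ is shattered by a collection of sets $\mathcal{R}$ if $\{R\cap Q: R\in\mathcal{R}\}$ equals the power set of $Q$. *)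

From Stdlib Require Import Reals.
From mathcomp Require Import all_boot.
Set Implicit Arguments. Unset Strict Implicit. Unset Printing Implicit Defensive.

Definition undirected (T : finType) (e : rel T) : Prop := symmetric e /\ irreflexive e.

Section Paths.
Variables (T : finType) (e : rel T).

(* number of walks u = p0, p1, ..., pk = v with k edges (the tuple lists p1..pk) *)
Definition nwalks (k : nat) (u v : T) : nat :=
  #|[set t : k.-tuple T | path e u t && (last u t == v)]|.

(* a shortest u-v path has at most #|T|-1 edges; dist = length of a shortest
   u-v path (its value is irrelevant when v is unreachable from u) *)
Definition dist (u v : T) : nat :=
  find (fun k => 0 < nwalks k u v) (iota 0 #|T|).

Definition reachable (u v : T) : bool := dist u v < #|T|.

Definition nsp (u v : T) : nat :=
  if reachable u v then nwalks (dist u v) u v else 0.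

(* sigma_uv(w) : number of shortest u-v paths having w as an internal node
   (w <> u, v and w lies on the path; shortest walks are simple) *)
Definition nsp_thru (w u v : T) : nat :=
  if reachable u v && (w != u) && (w != v) then
    #|[set t : (dist u v).-tuple T | [&& path e u t, last u t == v & w \in t]]|
  else 0.

Definition fw (w u v : T) : R :=
  if nsp u v == 0 then R0 else Rdiv (INR (nsp_thru w u v)) (INR (nsp u v)).

End Paths.

(* Take x_i := 1/sigma_{u_i v_i}.  Since sigma_{uv}(w) is a natural number,
   x_i <= f_w(u_i,v_i) holds exactly when w is internal to some shortest
   u_i-v_i path, so shattering reduces to a combinatorial requirement: for
   every subset S of the four pairs some vertex lies on shortest paths of
   exactly the pairs in S.  This is checked on an explicit 34-vertex graph,
   where all path counts are computed by dynamic programming on walk counts: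
   shortest walks are the walks of length dist, and those avoiding w are
   counted by forbidding w. *)
From Pilot Require Import Defs.
From Stdlib Require Import Reals Lra.
From mathcomp Require Import all_boot.
Set Implicit Arguments. Unset Strict Implicit. Unset Printing Implicit Defensive.

Lemma card_set_sum (U : finType) (P : pred U) : #|[set t : U | P t]| = \sum_(t : U) P t.
Proof.
rewrite -sum1_card big_mkcond /=; apply: eq_bigr => t _.
by rewrite inE; case: (P t).
Qed.

Section WalksInside.
Variables (T : finType) (e : rel T).

Definition nwalks_in (a : pred T) (k : nat) (u v : T) : nat :=
  \sum_(t : k.-tuple T) [&& path e u t, last u t == v & all a t].

Lemma nwalks_in0 a u v : nwalks_in a 0 u v = (u == v).
Proof.
rewrite /nwalks_in (big_pred1 [tuple]) /=; first by rewrite andbT.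
by move=> t; symmetry; apply/eqP; exact: tuple0.
Qed.

Lemma nwalks_inS a k u v :
  nwalks_in a k.+1 u v = \sum_(y | e u y && a y) nwalks_in a k y v.
Proof.
rewrite /nwalks_in (reindex (fun p : T * k.-tuple T => [tuple of p.1 :: p.2])); last first.
  exists (fun t : k.+1.-tuple T => (thead t, [tuple of behead t])).
    by case=> x t _ /=; rewrite theadE; congr (_, _); exact: val_inj.
  by move=> t _; case/tupleP: t => x t'; apply: val_inj; rewrite /= theadE.
transitivity (\sum_y \sum_(t : k.-tuple T)
    ([&& path e u (y :: t), last u (y :: t) == v & all a (y :: t)] : nat)).
  by rewrite pair_bigA.
rewrite [RHS]big_mkcond /=; apply: eq_bigr => y _.
case: (e u y); case: (a y) => /=.
all: first [apply: eq_bigr => t _ | apply: big1 => t _].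
all: by case: (path e y t); case: (last y t == v); case: (all a t).
Qed.

Lemma nwalksE k u v : nwalks e k u v = nwalks_in predT k u v.
Proof.
by rewrite /nwalks card_set_sum; apply: eq_bigr => t _; rewrite all_predT andbT.
Qed.

Lemma nsp_thruE w u v :
  nsp_thru e w u v =
  if reachable e u v && (w != u) && (w != v) then
    nwalks e (Defs.dist e u v) u v - nwalks_in (predC1 w) (Defs.dist e u v) u v
  else 0.
Proof.
rewrite /nsp_thru nwalksE; case: ifP => // _.
rewrite card_set_sum /nwalks_in.
have splitE (t : (Defs.dist e u v).-tuple T) :
    [&& path e u t, last u t == v & all predT t] =
    [&& path e u t, last u t == v & w \in t] + [&& path e u t, last u t == v & all (predC1 w) t]
    :> nat.
  have -> : all (predC1 w) t = (w \notin t).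
    by apply/allP/idP => [H | H x Hx]; [apply/negP => /H; rewrite /= eqxx | apply: contraNneq H => <-].
  by rewrite all_predT; case: (path e u t); case: (last u t == v); case: (w \in t).
by rewrite (eq_bigr _ (fun t _ => splitE t)) big_split /= addnK.
Qed.

Lemma inv_nsp_le_fw w u v :
  0 < nsp e u v -> Rle (Rinv (INR (nsp e u v))) (fw e w u v) <-> 0 < nsp_thru e w u v.
Proof.
move=> s_gt0; rewrite /fw ifN -?lt0n //.
move: (nsp e u v) (nsp_thru e w u v) s_gt0 => s k s_gt0.
have inv_s_gt0 : Rlt R0 (Rinv (INR s)) by apply/Rinv_0_lt_compat/lt_0_INR/ltP.
rewrite /Rdiv -[X in Rle X _]Rmult_1_l; split => [le_inv | k_gt0].
- by apply/leP/INR_le/(Rmult_le_reg_r _ _ _ inv_s_gt0).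
- by apply: Rmult_le_compat_r; [exact: Rlt_le | apply: (le_INR 1); apply/leP].
Qed.

End WalksInside.

Section AdjacencyLists.
Variables (n : nat) (adj : seq (seq nat)).

Definition adj_rel : rel 'I_n := fun x y => (y : nat) \in nth [::] adj x.

Definition adj_sym : bool :=
  all (fun x => all (fun y => (y \in nth [::] adj x) == (x \in nth [::] adj y)) (iota 0 n))
      (iota 0 n).

Definition adj_irr : bool := all (fun x => x \notin nth [::] adj x) (iota 0 n).

Definition adj_wf : bool :=
  all (fun x => uniq (nth [::] adj x) && all (gtn n) (nth [::] adj x)) (iota 0 n).

Lemma mem_iota_ord (x : 'I_n) : (x : nat) \in iota 0 n.
Proof. by rewrite mem_iota add0n ltn_ord. Qed.

Lemma adj_undirected : adj_sym -> adj_irr -> undirected adj_rel.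
Proof.
move=> /allP sym /allP irr; split=> [x y | x].
- exact/eqP/(allP (sym _ (mem_iota_ord x)) _ (mem_iota_ord y)).
- exact: negPf (irr _ (mem_iota_ord x)).
Qed.

(* The [let] shares the previous table; without it evaluation is exponential in [k]. *)
Fixpoint walk_table (a : pred nat) (k v : nat) : seq nat :=
  if k is k'.+1 then
    let prev := walk_table a k' v in
    [seq sumn [seq nth 0 prev y | y <- nth [::] adj x & a y] | x <- iota 0 n]
  else [seq nat_of_bool (x == v) | x <- iota 0 n].

Lemma sum_ord_mem (s : seq nat) (P : pred 'I_n) (Pn : pred nat) (F : nat -> nat) :
  uniq s -> all (gtn n) s -> (forall y : 'I_n, P y = Pn y) ->
  \sum_(y : 'I_n | ((y : nat) \in s) && P y) F y = sumn [seq F y | y <- s & Pn y].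
Proof.
move=> s_uniq /allP s_lt PE.
rewrite (eq_bigl (fun y : 'I_n => ((y : nat) \in s) && Pn y)) => [|y]; last by rewrite PE.
rewrite -(big_mkord (fun m => (m \in s) && Pn m) F) /index_iota subn0 -big_filter.
rewrite sumnE big_map big_filter -big_filter.
apply/perm_big/uniq_perm; rewrite ?filter_uniq ?iota_uniq // => m.
rewrite !mem_filter mem_iota add0n /=.
by case s_m: (m \in s); rewrite ?andbF // (s_lt m s_m : m < n) andbT.
Qed.

Hypothesis adjP : adj_wf.

Lemma nwalks_in_table (a : pred 'I_n) (an : pred nat) :
  (forall y : 'I_n, a y = an y) ->
  forall k (x v : 'I_n), nwalks_in adj_rel a k x v = nth 0 (walk_table an k v) x.
Proof.
move=> aE; elim=> [|k IH] x v /=; rewrite (nth_map 0) ?size_iota // nth_iota // add0n.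
  by rewrite nwalks_in0.
rewrite nwalks_inS (eq_bigr (fun y : 'I_n => nth 0 (walk_table an k v) y)) => [|y _]; last exact: IH.
have /andP[adj_uniq adj_lt] := allP adjP x (mem_iota_ord x).
exact: sum_ord_mem.
Qed.

Definition table_dist (u v : nat) : nat :=
  find (fun k => 0 < nth 0 (walk_table predT k v) u) (iota 0 n).

Definition table_nsp (u v : nat) : nat :=
  if table_dist u v < n then nth 0 (walk_table predT (table_dist u v) v) u else 0.

Definition table_thru (w u v : nat) : nat :=
  if (table_dist u v < n) && (w != u) && (w != v) then
    nth 0 (walk_table predT (table_dist u v) v) u
    - nth 0 (walk_table (predC1 w) (table_dist u v) v) u
  else 0.

Lemma nwalks_table k (u v : 'I_n) : nwalks adj_rel k u v = nth 0 (walk_table predT k v) u.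
Proof. by rewrite nwalksE; exact: nwalks_in_table. Qed.

Lemma dist_table (u v : 'I_n) : Defs.dist adj_rel u v = table_dist u v.
Proof. by rewrite /Defs.dist card_ord; apply: eq_find => k; rewrite nwalks_table. Qed.

Lemma nsp_table (u v : 'I_n) : nsp adj_rel u v = table_nsp u v.
Proof. by rewrite /nsp /table_nsp /reachable dist_table card_ord nwalks_table. Qed.

Lemma nsp_thru_table (w u v : 'I_n) : nsp_thru adj_rel w u v = table_thru w u v.
Proof.
rewrite nsp_thruE /table_thru /reachable dist_table card_ord nwalks_table.
by rewrite (@nwalks_in_table _ (predC1 (w : nat))) // => y; rewrite /= val_eqE.
Qed.

End AdjacencyLists.

Notation N := 34.

Definition G_adj : seq (seq nat) :=
  [:: [:: 1]; [:: 0; 2]; [:: 1; 3; 28]; [:: 2; 4; 19]; [:: 3; 5; 12]; [:: 4; 6; 29];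
      [:: 5; 7]; [:: 6; 8; 13]; [:: 7; 9; 21]; [:: 8]; [:: 11]; [:: 10; 12];
      [:: 4; 11; 22]; [:: 7; 14; 25]; [:: 13; 15; 32]; [:: 14; 16]; [:: 15];
      [:: 18; 20]; [:: 17; 19]; [:: 3; 18]; [:: 17; 21]; [:: 8; 20]; [:: 12; 23];
      [:: 22; 24]; [:: 23; 26]; [:: 13; 26; 33]; [:: 24; 25]; [:: 28; 31]; [:: 2; 27];
      [:: 5; 30]; [:: 29; 33]; [:: 27; 32]; [:: 14; 31]; [:: 25; 30]].

Definition G : rel 'I_N := adj_rel G_adj.

Lemma G_wf : adj_wf N G_adj. Proof. by vm_compute. Qed.

Lemma G_undirected : undirected G.
Proof. by apply: adj_undirected; vm_compute. Qed.

Definition pairs : seq (nat * nat) := [:: (17, 24); (27, 30); (0, 9); (10, 16)].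

Definition src (i : 'I_4) : 'I_N := inord (nth (0, 0) pairs i).1.
Definition dst (i : 'I_4) : 'I_N := inord (nth (0, 0) pairs i).2.

Lemma src_val (i : 'I_4) : src i = (nth (0, 0) pairs i).1 :> nat.
Proof. by rewrite inordK; case: i => [[|[|[|[|]]]]]. Qed.

Lemma dst_val (i : 'I_4) : dst i = (nth (0, 0) pairs i).2 :> nat.
Proof. by rewrite inordK; case: i => [[|[|[|[|]]]]]. Qed.

Definition thru_pattern (w : nat) : seq bool :=
  [seq 0 < table_thru N G_adj w p.1 p.2 | p <- pairs].

Lemma thru_pattern_surj b0 b1 b2 b3 :
  has (fun w => thru_pattern w == [:: b0; b1; b2; b3]) (iota 0 N).
Proof. by case: b0; case: b1; case: b2; case: b3; vm_compute. Qed.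

Lemma table_nsp_pairs : [seq table_nsp N G_adj p.1 p.2 | p <- pairs] = [:: 2; 2; 1; 1].
Proof. by vm_compute. Qed.

Lemma nsp_pair (i : 'I_4) : nsp G (src i) (dst i) = nth 0 [:: 2; 2; 1; 1] i.
Proof.
by rewrite nsp_table ?G_wf // src_val dst_val -table_nsp_pairs (nth_map (0, 0)) ?ltn_ord.
Qed.

Lemma nsp_thru_pair (w : 'I_N) (i : 'I_4) :
  (0 < nsp_thru G w (src i) (dst i)) = nth false (thru_pattern w) i.
Proof.
by rewrite nsp_thru_table ?G_wf // src_val dst_val (nth_map (0, 0)) ?ltn_ord.
Qed.

Theorem lemma4 :
  exists (T : finType) (e : rel T), undirected e /\
  exists (u v : 'I_4 -> T) (x : 'I_4 -> R),
    (forall i, u i != v i) /\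
    nsp e (u (@inord 3 0)) (v (@inord 3 0)) = 2 /\ nsp e (u (@inord 3 1)) (v (@inord 3 1)) = 2 /\
    nsp e (u (@inord 3 2)) (v (@inord 3 2)) = 1 /\ nsp e (u (@inord 3 3)) (v (@inord 3 3)) = 1 /\
    (forall i, Rlt R0 (x i) /\ Rle (x i) R1) /\
    (* the set {((u_i,v_i),x_i)} is shattered by {R_w : w in V}:
       every subset S of the four points is cut out by some R_w *)
    (forall S : {set 'I_4}, exists w : T,
       forall i, i \in S <-> Rle (x i) (fw e w (u i) (v i))).
Proof.
have nsp12 i : nsp G (src i) (dst i) = 1 \/ nsp G (src i) (dst i) = 2.
  by rewrite nsp_pair; case: i => [[|[|[|[|]]]]] /=; auto.
exists 'I_N, G; split; first exact: G_undirected.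
exists src, dst, (fun i => Rinv (INR (nsp G (src i) (dst i)))).
split; first by move=> i; rewrite -(inj_eq (@ord_inj N)) src_val dst_val; case: i => [[|[|[|[|]]]]].
do 4 (split; first by rewrite nsp_pair inordK).
split; first by move=> i; case: (nsp12 i) => ->; simpl INR; split; lra.
move=> S; case/hasP: (thru_pattern_surj (inord 0 \in S) (inord 1 \in S) (inord 2 \in S) (inord 3 \in S)).
move=> w; rewrite mem_iota add0n => w_lt /eqP pattern_w.
exists (Ordinal w_lt) => i; rewrite inv_nsp_le_fw; last by case: (nsp12 i) => ->.
rewrite nsp_thru_pair pattern_w.
suff -> : nth false [:: inord 0 \in S; inord 1 \in S; inord 2 \in S; inord 3 \in S] i = (i \in S) by [].
by case: i => [[|[|[|[|]]]] ?] //=; congr (_ \in S); apply: val_inj; rewrite /= inordK.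
Qed.
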